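(* Let ''opt'' denote either ''mV'' or ''mVc'', and suppose the subsampling probabilities are $\pi_i=\pi_i^{opt}=r\frac{h_i^{opt}\wedge M}{\sum_{j=1}^n(h_j^{opt}\wedge M)}$ with $k$ and $M$ defined from $\{h_i^{opt}\}$ as in the context. Index the data points by the increasing order of $h^{opt}$, so that $h^{opt}_{(i)}$ is the $i$-th smallest value and $h^{mV}_{(i)}$ denotes the value of $h^{mV}$ at that same data point. Then the asymptotic MSE of $\tilde\theta$ given $\mathcal{D}_n$, namely $\mathrm{tr}(\tilde\Sigma)$, equals $$\frac{4}{n^2(r-k)}\Big[\sum_{i=1}^{n-k}h^{opt}_{(i)}\Big]\sum_{i=1}^{n-k}\frac{[h^{mV}_{(i)}]^2}{h^{opt}_{(i)}}-\frac{4}{n^2}\sum_{i=1}^{n-k}[h^{mV}_{(i)}]^2.$$ In particular, for opt $=$ mV this minimum value of $\mathrm{tr}(\tilde\Sigma)$ over all admissible probabilities equals $$\frac{4}{n^2(r-k)}\Big[\sum_{i=1}^{n-k}h^{mV}_{(i)}\Big]^2-\frac{4}{n^2}\sum_{i=1}^{n-k}[h^{mV}_{(i)}]^2.$$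
   Context: Physical data $\mathcal{D}_n=\{(x_i,y_i^p)\}_{i=1}^n$; $\hat y^s(x,\theta)$ is a surrogate of a computer model, differentiable in $\theta\in\Theta\subset\mathbb{R}^q$; $\hat\theta=\arg\min_{\theta\in\Theta}\frac1n\sum_i[y_i^p-\hat y^s(x_i,\theta)]^2$; $g_i=\nabla_\theta\hat y^s(x_i,\hat\theta)$; $\tilde J=\frac1n\sum_i\frac{\partial^2[y_i^p-\hat y^s(x_i,\hat\theta)]^2}{\partial\theta\partial\theta^T}$ (assumed invertible). $h_i^{mV}=|y_i^p-\hat y^s(x_i,\hat\theta)|(g_i^T\tilde J^{-2}g_i)^{1/2}$, $h_i^{mVc}=|y_i^p-\hat y^s(x_i,\hat\theta)|(g_i^Tg_i)^{1/2}$. Given $h^{opt}$ (either $h^{mV}$ or $h^{mVc}$) with order statistics $h^{opt}_{(1)}\le\dots\le h^{opt}_{(n)}$, $h^{opt}_{(n+1)}=\infty$, $r\in\{1,\dots,n-1\}$ and $h^{opt}_{(n-r)}>0$: $k=\min\{s:0\le s\le r,(r-s)h^{opt}_{(n-s)}<\sum_{i=1}^{n-s}h^{opt}_{(i)}\}$, $M=\frac{1}{r-k}\sum_{i=1}^{n-k}h^{opt}_{(i)}$. For probabilities $\pi_i\in(0,1]$ with $\sum_i\pi_i=r$: $\tilde V=\frac{4}{n^2}\sum_i\frac{1-\pi_i}{\pi_i}[y_i^p-\hat y^s(x_i,\hat\theta)]^2g_ig_i^T$, $\tilde\Sigma=\tilde J^{-1}\tilde V\tilde J^{-1}$. *)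

From mathcomp Require Import all_boot all_order all_algebra perm.
From mathcomp Require Import all_classical all_reals all_analysis.
Import Order.TTheory GRing.Theory Num.Theory numFieldNormedType.Exports.
Set Implicit Arguments. Unset Strict Implicit. Unset Printing Implicit Defensive.
Local Open Scope ring_scope.

Definition resid (R : realType) (n q : nat) (X : Type) (x : 'I_n -> X)
  (yp : 'I_n -> R) (ys : X -> 'rV[R]_q -> R) (i : 'I_n) (th : 'rV[R]_q) : R :=
  yp i - ys (x i) th.

Definition loss (R : realType) (n q : nat) (X : Type) (x : 'I_n -> X)
  (yp : 'I_n -> R) (ys : X -> 'rV[R]_q -> R) (th : 'rV[R]_q) : R :=
  n%:R^-1 * \sum_(i < n) (resid x yp ys i th) ^+ 2.

Definition gradient (R : realType) (q : nat) (f : 'rV[R]_q -> R) (th : 'rV[R]_q)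
  : 'cV[R]_q := \col_a derive f th (delta_mx 0 a).

Definition hessian (R : realType) (q : nat) (f : 'rV[R]_q -> R) (th : 'rV[R]_q)
  : 'M[R]_q :=
  \matrix_(a, b) derive (fun t => derive f t (delta_mx 0 b)) th (delta_mx 0 a).

Definition gvec (R : realType) (n q : nat) (X : Type) (x : 'I_n -> X)
  (ys : X -> 'rV[R]_q -> R) (thhat : 'rV[R]_q) (i : 'I_n) : 'cV[R]_q :=
  gradient (ys (x i)) thhat.

Definition Jtil (R : realType) (n q : nat) (X : Type) (x : 'I_n -> X)
  (yp : 'I_n -> R) (ys : X -> 'rV[R]_q -> R) (thhat : 'rV[R]_q) : 'M[R]_q :=
  n%:R^-1 *: \sum_(i < n) hessian (fun th => (resid x yp ys i th) ^+ 2) thhat.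

Definition h_mV (R : realType) (n q : nat) (X : Type) (x : 'I_n -> X)
  (yp : 'I_n -> R) (ys : X -> 'rV[R]_q -> R) (thhat : 'rV[R]_q) (i : 'I_n) : R :=
  let g := gvec x ys thhat i in
  let Ji := invmx (Jtil x yp ys thhat) in
  `|resid x yp ys i thhat| * Num.sqrt ((g^T *m (Ji *m Ji) *m g) 0 0).

Definition h_mVc (R : realType) (n q : nat) (X : Type) (x : 'I_n -> X)
  (yp : 'I_n -> R) (ys : X -> 'rV[R]_q -> R) (thhat : 'rV[R]_q) (i : 'I_n) : R :=
  let g := gvec x ys thhat i in
  `|resid x yp ys i thhat| * Num.sqrt ((g^T *m g) 0 0).

Definition Vtil (R : realType) (n q : nat) (X : Type) (x : 'I_n -> X)
  (yp : 'I_n -> R) (ys : X -> 'rV[R]_q -> R) (thhat : 'rV[R]_q)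
  (pi : 'I_n -> R) : 'M[R]_q :=
  (4 / (n%:R ^+ 2)) *:
    \sum_(i < n) (((1 - pi i) / pi i) * (resid x yp ys i thhat) ^+ 2)
                   *: (gvec x ys thhat i *m (gvec x ys thhat i)^T).

Definition Sigmatil (R : realType) (n q : nat) (X : Type) (x : 'I_n -> X)
  (yp : 'I_n -> R) (ys : X -> 'rV[R]_q -> R) (thhat : 'rV[R]_q)
  (pi : 'I_n -> R) : 'M[R]_q :=
  let Ji := invmx (Jtil x yp ys thhat) in
  Ji *m Vtil x yp ys thhat pi *m Ji.

Definition sorts_incr (R : realType) (n : nat) (h : 'I_n -> R)
  (sigma : {perm 'I_n}) : Prop :=
  forall i j : 'I_n, (i <= j)%N -> h (sigma i) <= h (sigma j).

(* value of f at the data point of rank j (1-indexed, 1 <= j <= n) in the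
   ordering sigma; with f = h and sigma sorting h, ostat h sigma j = h_(j) *)
Definition ostat (R : realType) (n : nat) (f : 'I_n -> R) (sigma : {perm 'I_n})
  (j : nat) : R :=
  nth 0 [seq f (sigma i) | i <- enum 'I_n] j.-1.

Definition kcond (R : realType) (n : nat) (h : 'I_n -> R) (sigma : {perm 'I_n})
  (r s : nat) : Prop :=
  (r - s)%:R * ostat h sigma (n - s) < \sum_(1 <= i < (n - s).+1) ostat h sigma i.

Definition is_k (R : realType) (n : nat) (h : 'I_n -> R) (sigma : {perm 'I_n})
  (r k : nat) : Prop :=
  [/\ (k <= r)%N, kcond h sigma r k & forall s, (s < k)%N -> ~ kcond h sigma r s].

Definition Mval (R : realType) (n : nat) (h : 'I_n -> R) (sigma : {perm 'I_n})
  (r k : nat) : R :=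
  ((r - k)%:R)^-1 * \sum_(1 <= i < (n - k).+1) ostat h sigma i.

Definition pi_opt (R : realType) (n : nat) (h : 'I_n -> R) (M : R) (r : nat)
  (i : 'I_n) : R :=
  r%:R * Num.min (h i) M / \sum_(j < n) Num.min (h j) M.

From mathcomp Require Import all_boot all_order all_algebra perm.
From mathcomp Require Import all_classical all_reals all_analysis.
Import Order.TTheory GRing.Theory Num.Theory numFieldNormedType.Exports.
From mathcomp Require Import ring zify.
Local Open Scope ring_scope.

(* With Ji := invmx Jtil, the trace of Sigmatil = Ji Vtil Ji is
      tr Sigmatil = 4/n^2 * sum_i (1 - pi_i)/pi_i * (h^mV_i)^2,
   because r_i^2 g_i^T Ji^2 g_i = (h^mV_i)^2 (here Ji is symmetric).
   Re-indexing this sum by the ranks of h^opt turns it into a statement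
   about a nondecreasing sequence s_1 <= ... <= s_n (the order statistics).
   The heart of the proof is the analysis of the truncation level M defined
   by the minimal k: one has k < r, s_j < M for j <= n-k and M <= s_j for
   j > n-k, hence sum_j (s_j /\ M) = r M and pi_j = (s_j /\ M)/M.  The terms
   with j > n-k then vanish (pi_j = 1) and the others give
      M * sum_{j<=n-k} a_j/s_j - sum_{j<=n-k} a_j. *)

Definition psum {V : nmodType} (s : nat -> V) (j : nat) : V :=
  \sum_(1 <= i < j.+1) s i.

Lemma psumS {V : nmodType} (s : nat -> V) j : psum s j.+1 = psum s j + s j.+1.
Proof. by rewrite /psum big_nat_recr. Qed.

Definition trunc_level {R : fieldType} (s : nat -> R) (n r k : nat) : R :=
  ((r - k)%:R)^-1 * psum s (n - k).

Section Truncation.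

Variables (R : realFieldType) (n r k : nat) (s : nat -> R).

Hypothesis r_ge1 : (1 <= r)%N.
Hypothesis r_le : (r <= n - 1)%N.
Hypothesis s_ge0 : forall j, 0 <= s j.
Hypothesis s_mono :
  forall {i j}, (1 <= i)%N -> (i <= j)%N -> (j <= n)%N -> s i <= s j.
Hypothesis s_pos : 0 < s (n - r).
Hypothesis k_le_r : (k <= r)%N.
Hypothesis k_ok : (r - k)%:R * s (n - k) < psum s (n - k).
Hypothesis k_min :
  forall t, (t < k)%N -> ~ ((r - t)%:R * s (n - t) < psum s (n - t)).

Local Notation M := (trunc_level s n r k).

Lemma psum_ge0 j : 0 <= psum s j.
Proof. by apply: sumr_ge0 => i _. Qed.

(* k = r is impossible: the condition already holds at r - 1, because the
   partial sum up to n - r + 1 exceeds its last term by psum s (n - r) > 0. *)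
Lemma k_lt_r : (k < r)%N.
Proof.
clear k_ok.
rewrite ltn_neqAle k_le_r andbT; apply/eqP => kr.
apply: (k_min (r - 1)%N); first by lia.
have -> : (r - (r - 1) = 1)%N by lia.
have -> : (n - (r - 1) = (n - r).+1)%N by lia.
rewrite psumS mul1r ltrDr.
have -> : (n - r = (n - r).-1.+1)%N by lia.
by rewrite psumS; apply: ltr_pwDr; rewrite ?psum_ge0 // prednK //; lia.
Qed.

Lemma rk_gt0 : 0 < (r - k)%:R :> R.
Proof. by rewrite ltr0n subn_gt0 k_lt_r. Qed.

Lemma psum_trunc : psum s (n - k) = (r - k)%:R * M.
Proof. by rewrite /trunc_level mulrA mulfV ?mul1r // gt_eqF ?rk_gt0. Qed.

Lemma s_lt_trunc j : (1 <= j <= n - k)%N -> s j < M.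
Proof.
move=> /andP[j1 jnk]; apply: le_lt_trans (s_mono j1 jnk (leq_subr k n)) _.
by rewrite -(ltr_pM2l rk_gt0) -psum_trunc.
Qed.

Lemma trunc_gt0 : 0 < M.
Proof. by apply: le_lt_trans (@s_lt_trunc (n - k)%N _); rewrite ?s_ge0 //; lia. Qed.

(* The values of rank above n - k are at least M, by minimality of k. *)
Lemma trunc_le_s j : (n - k < j <= n)%N -> M <= s j.
Proof.
move=> /andP[j1 j2]; apply: le_trans (s_mono _ j1 j2); last by lia.
have /negP := k_min (k - 1)%N ltac:(lia).
have -> : (r - (k - 1) = (r - k).+1)%N by lia.
have -> : (n - (k - 1) = (n - k).+1)%N by lia.
rewrite psumS psum_trunc -leNgt -natr1 mulrDl mul1r lerD2r.
by rewrite ler_pM2l ?rk_gt0.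
Qed.

Lemma sum_min_trunc : \sum_(1 <= j < n.+1) Num.min (s j) M = r%:R * M.
Proof.
rewrite (@big_cat_nat _ _ _ (n - k).+1) /=; [|lia|lia].
rewrite (@eq_big_nat _ _ _ 1 (n - k).+1 _ s); last first.
  by move=> j j_lo; apply/min_l/ltW/s_lt_trunc; lia.
rewrite (@eq_big_nat _ _ _ (n - k).+1 n.+1 _ (fun=> M)); last first.
  by move=> j j_hi; apply/min_r/trunc_le_s; lia.
rewrite -/(psum s _) psum_trunc sumr_const_nat -[M *+ _]mulr_natl -mulrDl -natrD.
by congr (_%:R * _); lia.
Qed.

Lemma truncated_weight_sum (a : nat -> R) :
  (forall j, (1 <= j <= n)%N -> s j = 0 -> a j = 0) ->
  let S := \sum_(1 <= j < n.+1) Num.min (s j) M in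
  \sum_(1 <= j < n.+1)
     ((1 - r%:R * Num.min (s j) M / S) / (r%:R * Num.min (s j) M / S)) * a j
  = M * \sum_(1 <= j < (n - k).+1) a j / s j - \sum_(1 <= j < (n - k).+1) a j.
Proof.
move=> a0 S; rewrite /S sum_min_trunc.
have r0 : r%:R != 0 :> R by rewrite pnatr_eq0 -lt0n.
have M0 : M != 0 by rewrite gt_eqF ?trunc_gt0.
rewrite (@big_cat_nat _ _ _ (n - k).+1) /=; [|lia|lia].
rewrite [X in _ + X]big1_seq ?addr0; last first.
  move=> j /andP[_]; rewrite mem_index_iota => j_hi.
  rewrite min_r; last by apply: trunc_le_s; lia.
  by rewrite divff ?subrr ?mul0r // mulf_neq0.
rewrite mulr_sumr -sumrB; apply: eq_big_nat => j j_lo.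
rewrite min_l; last by apply/ltW/s_lt_trunc; lia.
have [sj0|sj0] := eqVneq (s j) 0; last by field; rewrite r0 M0 sj0.
by rewrite a0 ?sj0 ?(mulr0, mul0r, subr0) //; lia.
Qed.

End Truncation.

Arguments k_lt_r {R n r k s}.
Arguments truncated_weight_sum {R n r k s}.

Lemma sum_by_rank {V : nmodType} {n : nat} (sigma : {perm 'I_n})
    (F : 'I_n -> V) (G : nat -> V) :
  (forall i : 'I_n, G i.+1 = F (sigma i)) ->
  \sum_(i < n) F i = \sum_(1 <= j < n.+1) G j.
Proof.
move=> FG; rewrite (reindex_inj (@perm_inj _ sigma)) /= big_add1 /= big_mkord.
by apply: eq_bigr => i _; rewrite FG.
Qed.

Lemma ostatS {R : realType} {n} (f : 'I_n -> R) sigma (i : 'I_n) :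
  ostat f sigma i.+1 = f (sigma i).
Proof. by rewrite /ostat /= (nth_map i) ?size_enum_ord // nth_ord_enum. Qed.

Lemma ostat_ge0 {R : realType} {n} {f : 'I_n -> R} sigma :
  (forall i, 0 <= f i) -> forall j, 0 <= ostat f sigma j.
Proof.
move=> f0 j; rewrite /ostat.
have [j_in|j_out] := ltnP j.-1 (size [seq f (sigma i) | i <- enum 'I_n]).
  by have /mapP[i _ ->] := mem_nth 0 j_in.
by rewrite nth_default.
Qed.

Lemma ostat_mono {R : realType} {n} {h : 'I_n -> R} {sigma} :
  sorts_incr h sigma ->
  forall i j, (1 <= i)%N -> (i <= j)%N -> (j <= n)%N ->
  ostat h sigma i <= ostat h sigma j.
Proof.
move=> sorted i j i1 ij jn.
have hi : (i.-1 < n)%N by lia.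
have hj : (j.-1 < n)%N by lia.
rewrite -(prednK i1) -(prednK (leq_trans i1 ij)).
rewrite (ostatS _ _ (Ordinal hi)) (ostatS _ _ (Ordinal hj)).
by apply: sorted => /=; lia.
Qed.

Lemma trace_sandwich {R : comPzRingType} {n q} (J : 'M[R]_q) c (b : 'I_n -> R)
    (g : 'I_n -> 'cV[R]_q) :
  \tr (J *m (c *: \sum_i b i *: (g i *m (g i)^T)) *m J)
  = c * \sum_i b i * ((g i)^T *m (J *m J) *m g i) 0 0.
Proof.
rewrite -scalemxAr -scalemxAl mxtraceZ mulmx_sumr mulmx_suml raddf_sum /=.
congr (_ * _); apply: eq_bigr => i _.
rewrite -scalemxAr -scalemxAl mxtraceZ; congr (_ * _).
by rewrite mxtrace_mulC !mulmxA mxtrace_mulC trace_mx11 !mulmxA.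
Qed.

Lemma quad_ge0 {R : realFieldType} {q} (u : 'cV[R]_q) : 0 <= (u^T *m u) 0 0.
Proof. rewrite mxE; apply: sumr_ge0 => j _; rewrite mxE -expr2; exact: sqr_ge0. Qed.

Lemma quad_eq0 {R : realFieldType} {q} (u : 'cV[R]_q) : (u^T *m u) 0 0 = 0 -> u = 0.
Proof.
rewrite mxE => u0; apply/matrixP => j i; rewrite (ord1 i) [RHS]mxE.
have terms_ge0 (l : 'I_q) : true -> 0 <= (u^T) 0 l * u l 0.
  by rewrite mxE -expr2 sqr_ge0.
have := psumr_eq0P terms_ge0 u0 (i := j) isT.
by rewrite mxE => /eqP; rewrite mulf_eq0 orbb => /eqP.
Qed.

Section Scores.

Variables (R : realType) (n q : nat) (X : Type) (x : 'I_n -> X)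
  (yp : 'I_n -> R) (ys : X -> 'rV[R]_q -> R) (thhat : 'rV[R]_q).

Local Notation Ji := (invmx (Jtil x yp ys thhat)).
Local Notation g := (gvec x ys thhat).
Local Notation e i := (resid x yp ys i thhat).

Hypothesis Jsym : (Jtil x yp ys thhat)^T = Jtil x yp ys thhat.

(* For symmetric J, g^T J^-2 g = |J^-1 g|^2, so (h^mV_i)^2 = e_i^2 g_i^T J^-2 g_i. *)
Lemma h_mV_sqr i : h_mV x yp ys thhat i ^+ 2 = e i ^+ 2 * ((g i)^T *m (Ji *m Ji) *m g i) 0 0.
Proof.
have quadE : (g i)^T *m (Ji *m Ji) *m g i = (Ji *m g i)^T *m (Ji *m g i).
  by rewrite trmx_mul trmx_inv Jsym !mulmxA.
rewrite /h_mV /= exprMn real_normK ?num_real //.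
by congr (_ * _); apply: sqr_sqrtr; rewrite quadE quad_ge0.
Qed.

Lemma trace_Sigmatil (pi : 'I_n -> R) :
  \tr (Sigmatil x yp ys thhat pi)
  = 4 / n%:R ^+ 2 * \sum_i (1 - pi i) / pi i * h_mV x yp ys thhat i ^+ 2.
Proof.
rewrite /Sigmatil /Vtil /= trace_sandwich; congr (_ * _).
by apply: eq_bigr => i _; rewrite h_mV_sqr [RHS]mulrA.
Qed.

Lemma h_mV_ge0 i : 0 <= h_mV x yp ys thhat i.
Proof. by rewrite /h_mV mulr_ge0 ?sqrtr_ge0. Qed.

Lemma h_mVc_ge0 i : 0 <= h_mVc x yp ys thhat i.
Proof. by rewrite /h_mVc mulr_ge0 ?sqrtr_ge0. Qed.

(* h^mVc_i = 0 forces e_i = 0 or g_i = 0, hence h^mV_i = 0. *)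
Lemma h_mV_eq0 i : h_mVc x yp ys thhat i = 0 -> h_mV x yp ys thhat i = 0.
Proof.
move/eqP; rewrite /h_mVc /= mulf_eq0 => /orP[/eqP e0|].
  by rewrite /h_mV /= e0 mul0r.
rewrite sqrtr_eq0 => quad_le0.
have g0 : g i = 0 by apply: quad_eq0; apply/eqP; rewrite eq_le quad_le0 quad_ge0.
by rewrite /h_mV /= g0 mulmx0 mxE sqrtr0 mulr0.
Qed.

End Scores.

(* x^2 / x = x in any field, including x = 0 since 0^-1 = 0. *)
Lemma sqr_divr {F : fieldType} (x : F) : x ^+ 2 / x = x.
Proof. by have [->|x0] := eqVneq x 0; rewrite ?expr0n ?mul0r // expr2 mulfK. Qed.

Theorem lemma2 (R : realType) (n q : nat) (X : Type) (x : 'I_n -> X)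
  (yp : 'I_n -> R) (ys : X -> 'rV[R]_q -> R) (Theta : set 'rV[R]_q)
  (thhat : 'rV[R]_q) :
  (forall i th, Theta th -> differentiable (ys (x i)) th) ->
  Theta thhat ->
  (forall th, Theta th -> loss x yp ys thhat <= loss x yp ys th) ->
  (Jtil x yp ys thhat)^T = Jtil x yp ys thhat ->
  Jtil x yp ys thhat \in unitmx ->
  forall (r : nat), (1 <= r <= n - 1)%N ->
  forall (hopt : 'I_n -> R),
    hopt = h_mV x yp ys thhat \/ hopt = h_mVc x yp ys thhat ->
  forall (sigma : {perm 'I_n}), sorts_incr hopt sigma ->
  0 < ostat hopt sigma (n - r) ->
  forall (k : nat), is_k hopt sigma r k ->
  let M := Mval hopt sigma r k in
  let trS := \tr (Sigmatil x yp ys thhat (pi_opt hopt M r)) in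
  let hV := ostat (h_mV x yp ys thhat) sigma in
  trS = 4 / (n%:R ^+ 2 * (r - k)%:R)
          * (\sum_(1 <= i < (n - k).+1) ostat hopt sigma i)
          * (\sum_(1 <= i < (n - k).+1) (hV i) ^+ 2 / ostat hopt sigma i)
        - 4 / (n%:R ^+ 2) * \sum_(1 <= i < (n - k).+1) (hV i) ^+ 2
  /\ (hopt = h_mV x yp ys thhat ->
      trS = 4 / (n%:R ^+ 2 * (r - k)%:R)
              * (\sum_(1 <= i < (n - k).+1) hV i) ^+ 2
            - 4 / (n%:R ^+ 2) * \sum_(1 <= i < (n - k).+1) (hV i) ^+ 2).
Proof.
move=> _ _ _ Jsym _ r /andP[r_ge1 r_le] hopt hopt_def sigma sorted s_pos k.
move=> [k_le_r k_ok k_min] M trS hV; set s := ostat hopt sigma.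
have hopt_ge0 i : 0 <= hopt i.
  by case: hopt_def => ->; [apply: h_mV_ge0 | apply: h_mVc_ge0].
have hV_eq0 j : (1 <= j <= n)%N -> s j = 0 -> hV j ^+ 2 = 0.
  move=> /andP[j1 jn]; have jn' : (j.-1 < n)%N by lia.
  rewrite /s /hV -(prednK j1) !(ostatS _ _ (Ordinal jn')) => hopt0.
  by case: hopt_def hopt0 => -> => [|/h_mV_eq0] ->; rewrite expr0n.
have trE : trS = 4 / n%:R ^+ 2 * \sum_(1 <= j < n.+1)
    ((1 - r%:R * Num.min (s j) M / \sum_(1 <= i < n.+1) Num.min (s i) M)
      / (r%:R * Num.min (s j) M / \sum_(1 <= i < n.+1) Num.min (s i) M)) * hV j ^+ 2.
  rewrite /trS trace_Sigmatil //; congr (_ * _); apply: sum_by_rank => i.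
  rewrite /pi_opt (sum_by_rank sigma _ (fun j => Num.min (s j) M)) => [|l].
    by rewrite /s /hV !ostatS.
  by rewrite /s ostatS.
have /= weighted_sum := truncated_weight_sum r_ge1 r_le (ostat_ge0 sigma hopt_ge0)
  (ostat_mono sorted) s_pos k_le_r k_ok k_min _ hV_eq0.
have k_lt : (k < r)%N :=
  k_lt_r r_ge1 r_le (ostat_ge0 sigma hopt_ge0) s_pos k_le_r k_min.
have rk0 : (r - k)%:R != 0 :> R by rewrite pnatr_eq0 subn_eq0 -ltnNge.
have n0 : n%:R != 0 :> R by rewrite pnatr_eq0 -lt0n; lia.
rewrite trE [M]/(trunc_level s n r k) weighted_sum /trunc_level /psum.
split=> [|hoptV]; first by field; rewrite n0 rk0.
rewrite hoptV -/hV (eq_bigr _ (fun j _ => sqr_divr (hV j))).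
by field; rewrite n0 rk0.
Qed.
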